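(* Let $w\in W$ and $\alpha\in\Phi^+\cap w\Phi^-$. The following are equivalent: (1) $w^{-1}\alpha\in-\Pi$; (2) $\alpha$ is a maximal element of $\Phi^+\cap w\Phi^-$ with respect to $\prec_w$; (3) there are no $\beta,\gamma\in\Phi^+\cap w\Phi^-$ with $\alpha=\beta+\gamma$, and there is no $\beta\in\Phi^+\cap w\Phi^-$ with $\alpha\prec\beta$, $(\alpha,\beta)=1$ and $\beta-\alpha\notin\Phi^+\cap w\Phi^-$.
   Context: $\Phi$ is a simply laced root system with positive roots $\Phi^+$, $\Phi^-=-\Phi^+$, simple roots $\Pi$, Weyl group $W$; the scalar product is normalized so that $(\alpha,\alpha)=2$ for all roots. For roots, $\alpha\prec\beta$ means $\beta-\alpha$ is a nonzero sum of positive roots; for $w\in W$, $\alpha\prec_w\beta$ means $w^{-1}\alpha\prec w^{-1}\beta$. *)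

From HB Require Import structures.
From mathcomp Require Import all_boot all_order all_algebra.
Set Implicit Arguments. Unset Strict Implicit. Unset Printing Implicit Defensive.
Import Order.TTheory GRing.Theory Num.Theory.
Local Open Scope ring_scope.

Section RootSystems.
Variables (R : realFieldType) (n : nat).
Notation V := 'rV[R]_n.

Definition dot (x y : V) : R := (x *m y^T) 0 0.

(* Reflection in the root a, with (a,a) = 2: s_a(x) = x - (x,a) a. *)
Definition refl (a x : V) : V := x - dot x a *: a.

(* A Weyl group element is given as a word l = [a1;...;ak] of roots:
   w = s_{a1} o ... o s_{ak};  its inverse is s_{ak} o ... o s_{a1}. *)
Definition wact (l : seq V) (x : V) : V := foldr refl x l.
Definition winv (l : seq V) (x : V) : V := wact (rev l) x.
Definition in_weyl (Phi : seq V) (l : seq V) : bool := all (mem Phi) l.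

Definition simply_laced_root_system (Phi Pi : seq V) : Prop :=
  [/\ (0 : V) \notin Phi,
      (forall a, a \in Phi -> dot a a = 2),
      (forall a b, a \in Phi -> b \in Phi -> refl a b \in Phi),
      (forall a b, a \in Phi -> b \in Phi -> exists z : int, dot a b = z%:~R) &
      [/\ {subset Pi <= Phi},
      free Pi &
      forall x, x \in Phi -> exists c : 'I_(size Pi) -> nat,
        x = \sum_(i < size Pi) (c i)%:R *: Pi`_i \/
        x = - \sum_(i < size Pi) (c i)%:R *: Pi`_i]].

Definition posroot (Phi Pi : seq V) (x : V) : Prop :=
  x \in Phi /\ exists c : 'I_(size Pi) -> nat,
    x = \sum_(i < size Pi) (c i)%:R *: Pi`_i.

Definition negroot (Phi Pi : seq V) (x : V) : Prop := posroot Phi Pi (- x).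

Definition rprec (Phi Pi : seq V) (a b : V) : Prop :=
  exists s : seq V, [/\ s != [::], forall x, x \in s -> posroot Phi Pi x
                       & b - a = \sum_(x <- s) x].

Definition rprec_w (Phi Pi : seq V) (l : seq V) (a b : V) : Prop :=
  rprec Phi Pi (winv l a) (winv l b).

Definition inN (Phi Pi : seq V) (l : seq V) (b : V) : Prop :=
  posroot Phi Pi b /\ exists g, negroot Phi Pi g /\ b = wact l g.

End RootSystems.

From HB Require Import structures.
From mathcomp Require Import all_boot all_order all_algebra.
From mathcomp Require Import ring lra zify.
Import Order.TTheory GRing.Theory Num.Theory.
Local Open Scope ring_scope.
Set Implicit Arguments. Unset Strict Implicit.

(* Put delta = - w^-1 alpha, a positive root.  A simple root is not the sum of
   two nonzero nonnegative combinations of simple roots, and each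
   configuration forbidden in (2) or (3) would split delta in this way, with
   summands among w^-1 (beta - alpha), - w^-1 beta, - w^-1 gamma.
   If delta is not simple, some simple s has (s, delta) = 1, so d = delta - s
   is a positive root with (d, s) = -1 and alpha = - (w d + w s).  As alpha is
   positive, w d (say) is negative; then beta = - w d lies in the inversion
   set above alpha for <_w, and either w s is negative too and
   alpha = - w d - w s, or (alpha, beta) = 2 + (s, d) = 1 and
   beta - alpha = w s lies outside the inversion set. *)

Section ScalarProduct.
Variables (R : realFieldType) (n : nat).
Implicit Types x y z : 'rV[R]_n.

Lemma dotC x y : dot x y = dot y x.
Proof. by rewrite /dot -[in RHS](trmxK y) -trmx_mul [RHS]mxE. Qed.

Lemma dotDl x y z : dot (x + y) z = dot x z + dot y z.
Proof. by rewrite /dot mulmxDl mxE. Qed.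

Lemma dotNl x z : dot (- x) z = - dot x z.
Proof. by rewrite /dot mulNmx mxE. Qed.

Lemma dotZl a x z : dot (a *: x) z = a * dot x z.
Proof. by rewrite /dot -scalemxAl mxE. Qed.

Lemma dotBl x y z : dot (x - y) z = dot x z - dot y z.
Proof. by rewrite dotDl dotNl. Qed.

Lemma dotDr x y z : dot z (x + y) = dot z x + dot z y.
Proof. by rewrite dotC dotDl !(dotC z). Qed.

Lemma dotNr x z : dot z (- x) = - dot z x.
Proof. by rewrite dotC dotNl dotC. Qed.

Lemma dotZr a x z : dot z (a *: x) = a * dot z x.
Proof. by rewrite dotC dotZl dotC. Qed.

Lemma dotBr x y z : dot z (x - y) = dot z x - dot z y.
Proof. by rewrite dotDr dotNr. Qed.

Lemma dot_suml (I : Type) (r : seq I) (F : I -> 'rV[R]_n) z :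
  dot (\sum_(i <- r) F i) z = \sum_(i <- r) dot (F i) z.
Proof. by rewrite /dot mulmx_suml summxE. Qed.

Lemma dotxx_eq0 x : (dot x x == 0) = (x == 0).
Proof.
apply/idP/eqP => [|->]; last by rewrite /dot mul0mx mxE.
rewrite /dot mxE psumr_eq0 => [/allP x0|j _]; last by rewrite mxE -expr2 sqr_ge0.
apply/rowP => j; have := x0 j (mem_index_enum j).
by rewrite !mxE /= mulf_eq0 orbb => /eqP.
Qed.

Lemma dotxx_ge0 x : 0 <= dot x x.
Proof. by rewrite /dot mxE sumr_ge0 // => j _; rewrite mxE -expr2 sqr_ge0. Qed.

End ScalarProduct.

Section Reflections.
Variables (R : realFieldType) (n : nat).
Implicit Types a x y : 'rV[R]_n.
Implicit Types l : seq 'rV[R]_n.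

Lemma reflD a x y : refl a (x + y) = refl a x + refl a y.
Proof. by rewrite /refl dotDl scalerDl opprD addrACA. Qed.

Lemma reflN a x : refl a (- x) = - refl a x.
Proof. by rewrite /refl dotNl scaleNr opprB opprK addrC. Qed.

Lemma refl_isometry a x y : dot a a = 2 -> dot (refl a x) (refl a y) = dot x y.
Proof. by move=> a2; rewrite /refl dotBl !dotBr !dotZl !dotZr a2 (dotC a y); ring. Qed.

Lemma reflK a : dot a a = 2 -> involutive (refl a).
Proof.
move=> a2 x; rewrite {1}/refl; have -> : dot (refl a x) a = - dot x a.
  by rewrite /refl dotBl dotZl a2; ring.
by rewrite scaleNr opprK subrK.
Qed.

Lemma refl_self a : dot a a = 2 -> refl a a = - a.
Proof. by move=> a2; rewrite /refl a2 scalerDl scale1r opprD addNKr. Qed.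

Lemma refl_dot1 a x : dot x a = 1 -> refl a x = x - a.
Proof. by move=> xa1; rewrite /refl xa1 scale1r. Qed.

Lemma wactD l x y : wact l (x + y) = wact l x + wact l y.
Proof. by elim: l => //= a l ->; rewrite reflD. Qed.

Lemma wactN l x : wact l (- x) = - wact l x.
Proof. by elim: l => //= a l ->; rewrite reflN. Qed.

Lemma winvD l x y : winv l (x + y) = winv l x + winv l y.
Proof. exact: wactD. Qed.

Lemma winvN l x : winv l (- x) = - winv l x.
Proof. exact: wactN. Qed.

Lemma winv_cons a l x : winv (a :: l) x = winv l (refl a x).
Proof. by rewrite /winv rev_cons /wact foldr_rcons. Qed.

Section UnitWord.
Variable l : seq 'rV[R]_n.
Hypothesis l2 : forall a, a \in l -> dot a a = 2.

Lemma wact_isometry x y : dot (wact l x) (wact l y) = dot x y.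
Proof.
elim: l l2 => //= a l' IH a2.
by rewrite refl_isometry ?a2 ?mem_head // IH // => b b_l'; rewrite a2 // inE b_l' orbT.
Qed.

Lemma winvK : cancel (winv l) (wact l).
Proof.
elim: l l2 => [|a l' IH] a2 x //; rewrite winv_cons /=.
by rewrite IH ?reflK ?a2 ?mem_head // => b b_l'; rewrite a2 // inE b_l' orbT.
Qed.

Lemma wactK : cancel (wact l) (winv l).
Proof.
elim: l l2 => [|a l' IH] a2 x //; rewrite winv_cons /=.
by rewrite reflK ?a2 ?mem_head // IH // => b b_l'; rewrite a2 // inE b_l' orbT.
Qed.

End UnitWord.
End Reflections.

Section Cone.
Variables (R : realFieldType) (n : nat) (Pi : seq 'rV[R]_n).
Implicit Types x y : 'rV[R]_n.
Local Notation comb c := (\sum_(i < size Pi) (c i)%:R *: Pi`_i).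

Definition cone x : Prop := exists c : 'I_(size Pi) -> nat, x = comb c.

Lemma comb0 (c : 'I_(size Pi) -> nat) : c =1 (fun=> 0%N) -> comb c = 0.
Proof. by move=> c0; rewrite big1 // => i _; rewrite c0 scale0r. Qed.

Lemma combD (c d : 'I_(size Pi) -> nat) :
  comb (fun i => c i + d i)%N = comb c + comb d.
Proof. by rewrite -big_split; apply: eq_bigr => i _; rewrite natrD scalerDl. Qed.

Lemma cone0 : cone 0.
Proof. by exists (fun=> 0%N); rewrite comb0. Qed.

Lemma coneD x y : cone x -> cone y -> cone (x + y).
Proof. by move=> [c ->] [d ->]; exists (fun i => c i + d i)%N; rewrite combD. Qed.

Lemma cone_sum (s : seq 'rV[R]_n) :
  (forall x, x \in s -> cone x) -> cone (\sum_(x <- s) x).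
Proof.
by move=> s_cone; rewrite big_seq; apply: big_ind => //; [exact: cone0 | exact: coneD].
Qed.

Hypothesis Pi_free : free Pi.

Lemma comb_inj (c d : 'I_(size Pi) -> nat) : comb c = comb d -> c =1 d.
Proof.
move=> cd i; apply/eqP; rewrite -(eqr_nat R) -subr_eq0; apply/eqP.
move/freeP: (Pi_free : free (in_tuple Pi)) => /(_ (fun j => (c j)%:R - (d j)%:R)); apply.
by under eq_bigr do rewrite scalerBl; rewrite sumrB cd subrr.
Qed.

Lemma cone_pointed x y : cone x -> cone y -> x + y = 0 -> x = 0.
Proof.
move=> [c ->] [d ->]; rewrite -combD => cd0.
have /comb_inj cd_0 : comb (fun i => c i + d i)%N = comb (fun=> 0%N).
  by rewrite cd0 comb0.
by apply: comb0 => i; move: (cd_0 i) => /= /eqP; rewrite addn_eq0 => /andP[/eqP].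
Qed.

Lemma nth_comb (J : 'I_(size Pi)) : Pi`_J = comb (fun i => nat_of_bool (i == J)).
Proof.
by rewrite (bigD1 J) //= eqxx scale1r big1 ?addr0 // => i /negbTE ->; rewrite scale0r.
Qed.

Lemma cone_simple s : s \in Pi -> cone s.
Proof. by move=> /(nthP 0) [j j_lt <-]; eexists; exact: (nth_comb (Ordinal j_lt)). Qed.

Lemma cone_simple_indecomposable s x y : s \in Pi -> cone x -> cone y ->
  s = x + y -> x = 0 \/ y = 0.
Proof.
move=> /(nthP 0) [j j_lt <-] [c ->] [d ->]; set J := Ordinal j_lt.
rewrite [Pi`_j](nth_comb J) -combD => /comb_inj cd.
have cd0 i : i != J -> c i = 0%N /\ d i = 0%N.
  by move=> /negbTE iJ; have := cd i; rewrite iJ; lia.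
have := cd J; rewrite eqxx /= => cdJ.
have [cJ0|cJ1] := eqVneq (c J) 0%N.
  by left; apply: comb0 => i; case: (eqVneq i J) => [->|/cd0[]].
by right; apply: comb0 => i; case: (eqVneq i J) => [->|/cd0[]//]; lia.
Qed.

End Cone.

Section RootSystem.
Variables (R : realFieldType) (n : nat) (Phi Pi : seq 'rV[R]_n).
Hypothesis rs : simply_laced_root_system Phi Pi.
Implicit Types a b x y : 'rV[R]_n.
Local Notation posroot := (posroot Phi Pi).
Local Notation negroot := (negroot Phi Pi).

Lemma root_neq0 x : x \in Phi -> x != 0.
Proof. by case: rs => Phi0 _ _ _ _ x_Phi; apply: contraNneq Phi0 => <-. Qed.

Lemma root_norm x : x \in Phi -> dot x x = 2.
Proof. by case: rs => _ + _ _ _; apply. Qed.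

Lemma refl_root a b : a \in Phi -> b \in Phi -> refl a b \in Phi.
Proof. by case: rs => _ _ + _ _; apply. Qed.

Lemma rootN x : x \in Phi -> - x \in Phi.
Proof. by move=> x_Phi; rewrite -refl_self ?root_norm ?refl_root. Qed.

Lemma simple_root s : s \in Pi -> s \in Phi.
Proof. by case: rs => _ _ _ _ [+ _ _]; apply. Qed.

Lemma simple_free : free Pi.
Proof. by case: rs => _ _ _ _ []. Qed.

Lemma posroot_simple s : s \in Pi -> posroot s.
Proof. by move=> s_Pi; split; [exact: simple_root | exact: cone_simple]. Qed.

Lemma posroot_or_negroot x : x \in Phi -> posroot x \/ negroot x.
Proof.
case: rs => _ _ _ _ [_ _ decomp] x_Phi; have [c [xE|xE]] := decomp x x_Phi.
  by left; split; last exists c.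
by right; split; [exact: rootN | exists c; rewrite xE opprK].
Qed.

Lemma posroot_negroot x : posroot x -> ~ negroot x.
Proof.
move=> [x_Phi x_cone] [_ Nx_cone].
by have := root_neq0 x_Phi; rewrite (cone_pointed simple_free x_cone Nx_cone) ?subrr ?eqxx.
Qed.

Lemma rprec_cone a b : rprec Phi Pi a b -> cone Pi (b - a) /\ b - a != 0.
Proof.
move=> [[|x s] [// _ s_pos ->]]; rewrite big_cons.
have [x_Phi x_cone] := s_pos x (mem_head x s).
have s_cone : cone Pi (\sum_(y <- s) y).
  by apply: cone_sum => y y_s; case: (s_pos y); rewrite // inE y_s orbT.
split; first exact: coneD.
by apply: contra_neq (root_neq0 x_Phi) => /(cone_pointed simple_free x_cone s_cone).
Qed.

Lemma rprec_of_posroot a b : posroot (b - a) -> rprec Phi Pi a b.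
Proof.
by move=> ba_pos; exists [:: b - a]; split=> [//|y|]; rewrite ?big_seq1 // inE => /eqP ->.
Qed.

Lemma root_dot_eq1 a b :
  a \in Phi -> b \in Phi -> a != b -> 0 < dot a b -> dot a b = 1.
Proof.
case: rs => _ _ _ int_dot _ a_Phi b_Phi ab ab_gt0; have [z abE] := int_dot a b a_Phi b_Phi.
have ba_norm : dot (b - a) (b - a) = 4 - 2 * dot a b.
  by rewrite dotBl !dotBr !root_norm // (dotC b a); ring.
have z_le2 : z <= 2.
  by rewrite -(ler_int R); have := dotxx_ge0 (b - a); rewrite ba_norm abE; lra.
have z_neq2 : z != 2.
  apply: contra_neq ab => z2; apply/eqP.
  by rewrite eq_sym -subr_eq0 -dotxx_eq0 ba_norm abE z2; apply/eqP; ring.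
move: ab_gt0; rewrite abE ltr0z => z_gt0.
by have -> : z = 1 by lia.
Qed.

Lemma posroot_sub_simple g : posroot g -> g \notin Pi ->
  exists2 s, s \in Pi & dot s g = 1 /\ posroot (g - s).
Proof.
move=> [g_Phi [c gE]] g_Pi.
have /hasP [s s_Pi sg_gt0] : has (fun s => 0 < dot s g) Pi.
  apply/negPn/negP => /hasPn sg_le0; have := root_norm g_Phi.
  rewrite {1}gE dot_suml => g_norm; suff : 2 <= 0 :> R by lra.
  rewrite -g_norm sumr_le0 // => i _; rewrite dotZl mulr_ge0_le0 //.
  by rewrite leNgt sg_le0 // mem_nth.
have s_Phi := simple_root s_Pi.
have sg1 : dot s g = 1.
  by apply: root_dot_eq1 => //; apply: contraNneq g_Pi => <-.
exists s => //; split=> //.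
have gs_Phi : g - s \in Phi by rewrite -refl_dot1 ?refl_root // dotC.
have [//|[_ sg_cone]] := posroot_or_negroot gs_Phi.
rewrite opprB in sg_cone.
have [g0|/eqP] := cone_simple_indecomposable simple_free s_Pi (ex_intro _ c gE) sg_cone
  (esym (subrKC g s)).
  by have := root_neq0 g_Phi; rewrite g0 eqxx.
by rewrite subr_eq0 => /eqP sg; rewrite -sg s_Pi in g_Pi.
Qed.

Lemma simple_neq_add s x y :
  s \in Pi -> cone Pi x -> cone Pi y -> x != 0 -> y != 0 -> s != x + y.
Proof.
move=> s_Pi x_cone y_cone x0 y0; apply/eqP.
by move/(cone_simple_indecomposable simple_free s_Pi x_cone y_cone) => [] /eqP; apply/negP.
Qed.

Lemma wact_root l x : all (mem Phi) l -> x \in Phi -> wact l x \in Phi.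
Proof. by elim: l => //= a l IH /andP[a_Phi /IH l_Phi] /l_Phi; apply: refl_root. Qed.

Section InversionSet.
Variable l : seq 'rV[R]_n.
Hypothesis l_Weyl : in_weyl Phi l.
Local Notation N := (inN Phi Pi l).

Lemma word_norm a : a \in l -> dot a a = 2.
Proof. by move=> a_l; apply: root_norm; apply: (allP l_Weyl). Qed.

Lemma winv_root x : x \in Phi -> winv l x \in Phi.
Proof. by apply: wact_root; rewrite all_rev. Qed.

Lemma inN_iff b : N b <-> posroot b /\ negroot (winv l b).
Proof.
split=> [[b_pos [g [g_neg bE]]]|[b_pos ub_neg]].
  by split=> //; rewrite bE (wactK word_norm).
by split=> //; exists (winv l b); rewrite (winvK word_norm).
Qed.

Lemma inN_opp_wact x : posroot x -> negroot (wact l x) -> N (- wact l x).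
Proof.
move=> x_pos wx_neg; apply/inN_iff; split=> //.
by rewrite /negroot winvN (wactK word_norm) opprK.
Qed.

Lemma wact_posroot_notin x : posroot x -> ~ N (wact l x).
Proof. by move=> x_pos /inN_iff[_]; rewrite (wactK word_norm); exact: posroot_negroot. Qed.

Variable alpha : 'rV[R]_n.
Hypothesis alpha_N : N alpha.

Lemma simple_wmaximal : - winv l alpha \in Pi ->
  ~ exists beta, N beta /\ rprec_w Phi Pi l alpha beta.
Proof.
move=> simple [b [/inN_iff[_ [ub_Phi ub_cone]] /rprec_cone[ab_cone ab_ne0]]].
have := simple_neq_add simple ub_cone ab_cone (root_neq0 ub_Phi) ab_ne0.
by rewrite addKr eqxx.
Qed.

Lemma simple_not_sum : - winv l alpha \in Pi ->
  ~ exists beta gamma, [/\ N beta, N gamma & alpha = beta + gamma].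
Proof.
move=> simple [b [g [/inN_iff[_ [ub_Phi ub_cone]] /inN_iff[_ [ug_Phi ug_cone]] abg]]].
have := simple_neq_add simple ub_cone ug_cone (root_neq0 ub_Phi) (root_neq0 ug_Phi).
by rewrite abg winvD opprD eqxx.
Qed.

Lemma simple_no_dot1 : - winv l alpha \in Pi ->
  ~ exists beta,
    [/\ N beta, rprec Phi Pi alpha beta, dot alpha beta = 1 & ~ N (beta - alpha)].
Proof.
move=> simple [b [b_N /rprec_cone[ba_cone _] ab1 ba_notN]].
have [[b_Phi _] [ub_Phi ub_cone]] := proj1 (inN_iff b) b_N.
have [[a_Phi _] _] := proj1 (inN_iff alpha) alpha_N.
have ba_Phi : b - alpha \in Phi by rewrite -refl_dot1 ?refl_root // dotC.
have [[uba_Phi uba_cone]|uba_neg] := posroot_or_negroot (winv_root ba_Phi); last first.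
  by apply: ba_notN; apply/inN_iff.
have := simple_neq_add simple uba_cone ub_cone (root_neq0 uba_Phi) (root_neq0 ub_Phi).
by rewrite winvD winvN addrAC subrr add0r eqxx.
Qed.

Lemma wact_split_negroot d s : posroot d -> posroot s -> alpha = - wact l (d + s) ->
  negroot (wact l d) \/ negroot (wact l s).
Proof.
move=> [d_Phi _] [s_Phi _] aE.
have [[a_Phi a_cone] _] := proj1 (inN_iff alpha) alpha_N.
have [[_ wd_cone]|] := posroot_or_negroot (wact_root l_Weyl d_Phi); last by left.
have [[_ ws_cone]|] := posroot_or_negroot (wact_root l_Weyl s_Phi); last by right.
exfalso; apply: (posroot_negroot (conj a_Phi a_cone)); split; first exact: rootN.
by rewrite aE opprK wactD; apply: coneD.
Qed.

Lemma wsucc_of_split d s : posroot d -> posroot s -> negroot (wact l d) ->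
  alpha = - wact l (d + s) -> exists beta, N beta /\ rprec_w Phi Pi l alpha beta.
Proof.
move=> d_pos s_pos wd_neg aE; exists (- wact l d); split; first exact: inN_opp_wact.
by apply: rprec_of_posroot; rewrite aE !winvN !(wactK word_norm) opprK addKr.
Qed.

Lemma split_decomposable d s : posroot d -> posroot s -> dot d s = -1 ->
  negroot (wact l d) -> alpha = - wact l (d + s) ->
  (exists beta gamma, [/\ N beta, N gamma & alpha = beta + gamma]) \/
  (exists beta,
    [/\ N beta, rprec Phi Pi alpha beta, dot alpha beta = 1 & ~ N (beta - alpha)]).
Proof.
move=> d_pos s_pos ds1 wd_neg aE; have [d_Phi _] := d_pos.
have [ws_pos|ws_neg] := posroot_or_negroot (wact_root l_Weyl (proj1 s_pos)).
  have ba : - wact l d - alpha = wact l s by rewrite aE wactD opprK addKr.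
  right; exists (- wact l d); split; first exact: inN_opp_wact.
  - by apply: rprec_of_posroot; rewrite ba.
  - rewrite aE dotNl dotNr opprK wactD dotDl !(wact_isometry word_norm).
    by rewrite root_norm // (dotC s d) ds1; lra.
  - by rewrite ba; apply: wact_posroot_notin.
left; exists (- wact l d), (- wact l s); split; try exact: inN_opp_wact.
by rewrite aE wactD opprD.
Qed.

Lemma nonsimple_decomposable : - winv l alpha \notin Pi ->
  (exists beta, N beta /\ rprec_w Phi Pi l alpha beta) /\
  ((exists beta gamma, [/\ N beta, N gamma & alpha = beta + gamma]) \/
   (exists beta,
     [/\ N beta, rprec Phi Pi alpha beta, dot alpha beta = 1 & ~ N (beta - alpha)])).
Proof.
move=> nonsimple; have [_ delta_pos] := proj1 (inN_iff alpha) alpha_N.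
have [s s_Pi [s_delta1 d_pos]] := posroot_sub_simple delta_pos nonsimple.
have s_pos := posroot_simple s_Pi.
have aE : alpha = - wact l (- winv l alpha - s + s).
  by rewrite subrK wactN (winvK word_norm) !opprK.
have ds1 : dot (- winv l alpha - s) s = -1.
  by rewrite dotBl (dotC _ s) s_delta1 root_norm ?simple_root //; lra.
have [wd_neg|ws_neg] := wact_split_negroot d_pos s_pos aE.
  by split; [exact: wsucc_of_split aE | exact: split_decomposable aE].
rewrite addrC in aE; rewrite dotC in ds1.
by split; [exact: wsucc_of_split aE | exact: split_decomposable aE].
Qed.

End InversionSet.
End RootSystem.

Lemma equiv3_of_bool (a : bool) (P Q : Prop) :
  (a -> P) -> (a -> Q) -> (~~ a -> ~ P /\ ~ Q) -> [/\ a <-> P, P <-> Q & a <-> Q].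
Proof.
case: a => aP aQ naPQ; first by have p := aP isT; have q := aQ isT.
by have [nP nQ] := naPQ isT; split; split=> // /nP.
Qed.

Theorem mainTheorem16 (R : realFieldType) (n : nat) (Phi Pi : seq 'rV[R]_n)
  (l : seq 'rV[R]_n) (alpha : 'rV[R]_n) :
  simply_laced_root_system Phi Pi ->
  in_weyl Phi l ->
  inN Phi Pi l alpha ->
  [/\ (- winv l alpha \in Pi) <->
        (~ exists beta, inN Phi Pi l beta /\ rprec_w Phi Pi l alpha beta),
      (~ exists beta, inN Phi Pi l beta /\ rprec_w Phi Pi l alpha beta) <->
        ((~ exists beta gamma, [/\ inN Phi Pi l beta, inN Phi Pi l gamma
                                 & alpha = beta + gamma]) /\
         (~ exists beta, [/\ inN Phi Pi l beta, rprec Phi Pi alpha beta,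
                             dot alpha beta = 1 & ~ inN Phi Pi l (beta - alpha)]))
    & (- winv l alpha \in Pi) <->
        ((~ exists beta gamma, [/\ inN Phi Pi l beta, inN Phi Pi l gamma
                                 & alpha = beta + gamma]) /\
         (~ exists beta, [/\ inN Phi Pi l beta, rprec Phi Pi alpha beta,
                             dot alpha beta = 1 & ~ inN Phi Pi l (beta - alpha)]))].
Proof.
move=> rs l_Weyl alpha_N; apply: equiv3_of_bool.
- exact: simple_wmaximal.
- by move=> simple; split; [exact: simple_not_sum | exact: simple_no_dot1].
move=> /(nonsimple_decomposable rs l_Weyl alpha_N) [wsucc decomposable].
split; first by apply.
by case=> no_sum no_dot1; case: decomposable.
Qed.
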